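(* Let $k$ be an infinite field of characteristic $0$, $X_1\subseteq X_2$, $Y_1\subseteq Y_2$ finite sets, $W_i=W(X_i,Y_i)=(L(X_i),A(X_i)Y_i)$ ($i=1,2$), and $H$ a representation. If $(T_1,T_2)$ with $T_1\subseteq L(X_2)$, $T_2\subseteq A(X_2)Y_2$ is $H$-closed in $W_2$, then $(T_1\cap L(X_1),\,T_2\cap A(X_1)Y_1)$ is $H$-closed in $W_1$.
   Context: A representation $H=(L,V)$ is a Lie algebra $L$ over $k$ with an $L$-module $V$; homomorphisms $(\varphi,\psi)$: Lie homomorphism $\varphi$, linear $\psi$, $\varphi(l)\circ\psi(v)=\psi(l\circ v)$. $L(X)$ free Lie algebra, $A(X)$ free associative algebra with unit, $A(X)Y$ free $A(X)$-module with basis $Y$; $W_1$ is regarded as a subrepresentation of $W_2$. For $W=W(X,Y)$ and $S_1\subseteq L(X)$, $S_2\subseteq A(X)Y$: $(S_1,S_2)'_{W,H}$ is the set of homomorphisms $(\varphi,\psi):W\to H$ with $S_1\subseteq\ker\varphi$, $S_2\subseteq\ker\psi$, $(S_1,S_2)''_{W,H}$ is the pair (intersection of these $\ker\varphi$, intersection of these $\ker\psi$), and $(S_1,S_2)$ is $H$-closed in $W$ if $(S_1,S_2)''_{W,H}=(S_1,S_2)$. *)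

From HB Require Import structures.
From mathcomp Require Import all_boot all_order all_algebra.
From mathcomp Require Import finmap.
From mathcomp Require Import monalg.

Set Implicit Arguments.
Unset Strict Implicit.
Unset Printing Implicit Defensive.

Import GRing.Theory.
Local Open Scope ring_scope.

Record lieAlgebra (k : fieldType) := LieAlgebra {
  lie_car :> lmodType k;
  lie_br : lie_car -> lie_car -> lie_car;
  lie_brDl : forall a b c, lie_br (a + b) c = lie_br a c + lie_br b c;
  lie_brDr : forall a b c, lie_br a (b + c) = lie_br a b + lie_br a c;
  lie_brZl : forall (t : k) a b, lie_br (t *: a) b = t *: lie_br a b;
  lie_brZr : forall (t : k) a b, lie_br a (t *: b) = t *: lie_br a b;
  lie_br_alt : forall a, lie_br a a = 0;
  lie_jacobi : forall a b c,
    lie_br a (lie_br b c) + lie_br b (lie_br c a) + lie_br c (lie_br a b) = 0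
}.

Record representation (k : fieldType) := Representation {
  rep_L : lieAlgebra k;
  rep_V : lmodType k;
  rep_act : rep_L -> rep_V -> rep_V;
  rep_actDl : forall l m v, rep_act (l + m) v = rep_act l v + rep_act m v;
  rep_actDr : forall l v w, rep_act l (v + w) = rep_act l v + rep_act l w;
  rep_actZl : forall (t : k) l v, rep_act (t *: l) v = t *: rep_act l v;
  rep_actZr : forall (t : k) l v, rep_act l (t *: v) = t *: rep_act l v;
  rep_act_br : forall l m v,
    rep_act (lie_br l m) v = rep_act l (rep_act m v) - rep_act m (rep_act l v)
}.

(* A(X): free associative algebra with unit (noncommutative polynomials). *)
Definition FreeAlg (k : fieldType) (X : finType) := {malg k[{fmonom X}]}.

(* A(X)Y: free A(X)-module with (finite) basis Y, i.e. A(X)^Y. *)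
Definition FreeMod (k : fieldType) (X Y : finType) := {ffun Y -> FreeAlg k X}.

Section Free.
Variables (k : fieldType) (X Y : finType).
Local Notation A := (FreeAlg k X).
Local Notation M := (FreeMod k X Y).

Definition comm (a b : A) : A := a * b - b * a.

Definition gen (x : X) : A := << fmu x >>.

(* the A(X)-module action on A(X)Y (restricted to L(X) this is the
   L(X)-module structure of W(X,Y)) *)
Definition mact (a : A) (v : M) : M := [ffun y => a * v y].

(* L(S) for S a subset of X: the Lie subalgebra of A(X) generated by S,
   i.e. the free Lie algebra on S realized inside A(S) subset A(X). *)
Inductive inLie (S : {set X}) : A -> Prop :=
  | inLie_gen x : x \in S -> inLie S (gen x)
  | inLie_add a b : inLie S a -> inLie S b -> inLie S (a + b)
  | inLie_scale (t : k) a : inLie S a -> inLie S (t *: a)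
  | inLie_comm a b : inLie S a -> inLie S b -> inLie S (comm a b).

Definition inAlg (S : {set X}) (a : A) : Prop :=
  forall m : {fmonom X}, m \in msupp a -> all (fun x => x \in S) (fmonom_val m).

Definition inMod (S : {set X}) (T : {set Y}) (v : M) : Prop :=
  forall y, (y \in T -> inAlg S (v y)) /\ (y \notin T -> v y = 0).

(* Homomorphisms are given by maps on A(X), A(X)Y whose behaviour only *)
(* matters on L(S), A(S)T.                                            *)

Variable H : representation k.

Definition is_hom (S : {set X}) (T : {set Y})
    (phi : A -> rep_L H) (psi : M -> rep_V H) : Prop :=
  (forall a b, inLie S a -> inLie S b -> phi (a + b) = phi a + phi b) /\
  (forall (t : k) a, inLie S a -> phi (t *: a) = t *: phi a) /\
  (forall a b, inLie S a -> inLie S b ->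
     phi (comm a b) = lie_br (phi a) (phi b)) /\
  (forall v w, inMod S T v -> inMod S T w -> psi (v + w) = psi v + psi w) /\
  (forall (t : k) v, inMod S T v -> psi (t *: v) = t *: psi v) /\
  (forall l v, inLie S l -> inMod S T v ->
     rep_act (phi l) (psi v) = psi (mact l v)).

Definition in_prime (S : {set X}) (T : {set Y})
    (S1 : A -> Prop) (S2 : M -> Prop) phi psi : Prop :=
  is_hom S T phi psi /\ (forall a, S1 a -> phi a = 0) /\ (forall v, S2 v -> psi v = 0).

Definition dprimeL (S : {set X}) (T : {set Y})
    (S1 : A -> Prop) (S2 : M -> Prop) (a : A) : Prop :=
  inLie S a /\ forall phi psi, in_prime S T S1 S2 phi psi -> phi a = 0.

Definition dprimeM (S : {set X}) (T : {set Y})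
    (S1 : A -> Prop) (S2 : M -> Prop) (v : M) : Prop :=
  inMod S T v /\ forall phi psi, in_prime S T S1 S2 phi psi -> psi v = 0.

Definition H_closed (S : {set X}) (T : {set Y})
    (S1 : A -> Prop) (S2 : M -> Prop) : Prop :=
  (forall a, dprimeL S T S1 S2 a <-> S1 a) /\
  (forall v, dprimeM S T S1 S2 v <-> S2 v).

End Free.

From HB Require Import structures.
From mathcomp Require Import all_boot all_order all_algebra.
From mathcomp Require Import finmap.
From mathcomp Require Import monalg.

(* Every homomorphism W(X2,Y2) -> H restricts to a homomorphism W(X1,Y1) -> H,
   and it kills (T1 \cap L(X1), T2 \cap A(X1)Y1) whenever it kills (T1, T2).
   Hence an element of W1 annihilated by all homomorphisms of W1 killing the
   trace of (T1, T2) is annihilated by all homomorphisms of W2 killing (T1, T2);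
   it lies in (T1, T2)'' = (T1, T2), and so in the trace. *)

Section Restriction.

Variables (k : fieldType) (X Y : finType) (H : representation k).
Variables (S S' : {set X}) (T T' : {set Y}).
Hypotheses (sSS' : S \subset S') (sTT' : T \subset T').

Local Notation A := (FreeAlg k X).
Local Notation M := (FreeMod k X Y).

Lemma inLie_subset (a : A) : inLie S a -> inLie S' a.
Proof.
elim=> [x Sx | ? ? _ ? _ ? | ? ? _ ? | ? ? _ ? _ ?].
- exact/inLie_gen/(subsetP sSS').
- exact: inLie_add.
- exact: inLie_scale.
- exact: inLie_comm.
Qed.

Lemma inAlg_subset (a : A) : inAlg S a -> inAlg S' a.
Proof. by move=> Sa m /Sa /allP Sm; apply/allP=> x /Sm /(subsetP sSS'). Qed.

Lemma inMod_subset (v : M) : inMod S T v -> inMod S' T' v.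
Proof.
move=> STv y; have [STvy Tvy0] := STv y; split; last first.
  by move=> T'y; apply: Tvy0; apply: contra T'y; apply: (subsetP sTT').
move=> _; have [/STvy/inAlg_subset // | /Tvy0 ->] := boolP (y \in T).
by move=> m; rewrite msupp0.
Qed.

Lemma is_hom_subset phi psi :
  is_hom (H := H) S' T' phi psi -> is_hom (H := H) S T phi psi.
Proof.
move=> [phiD [phiZ [phiC [psiD [psiZ compat]]]]].
have L := inLie_subset; have W := inMod_subset.
split; [|split; [|split; [|split; [|split]]]].
- by move=> a b /L ? /L ?; apply: phiD.
- by move=> t a /L ?; apply: phiZ.
- by move=> a b /L ? /L ?; apply: phiC.
- by move=> v w /W ? /W ?; apply: psiD.
- by move=> t v /W ?; apply: psiZ.
- by move=> l v /L ? /W ?; apply: compat.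
Qed.

Variables (U1 : A -> Prop) (U2 : M -> Prop).

Let V1 (a : A) := U1 a /\ inLie S a.
Let V2 (v : M) := U2 v /\ inMod S T v.

Lemma in_prime_restrict phi psi :
  in_prime S' T' U1 U2 phi psi -> in_prime (H := H) S T V1 V2 phi psi.
Proof.
move=> [/is_hom_subset hom [phiU1 psiU2]]; split=> //.
by split=> [a [/phiU1 ?] | v [/psiU2 ?]].
Qed.

Lemma dprimeL_restrict (a : A) :
  dprimeL H S T V1 V2 a -> dprimeL H S' T' U1 U2 a.
Proof.
move=> [/inLie_subset Sa kill]; split=> // phi psi.
by move=> /in_prime_restrict; apply: kill.
Qed.

Lemma dprimeM_restrict (v : M) :
  dprimeM H S T V1 V2 v -> dprimeM H S' T' U1 U2 v.
Proof.
move=> [/inMod_subset STv kill]; split=> // phi psi.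
by move=> /in_prime_restrict; apply: kill.
Qed.

Lemma H_closed_restrict :
  H_closed H S' T' U1 U2 -> H_closed H S T V1 V2.
Proof.
move=> [closedL closedM]; split=> [a | v]; split.
- move=> dpa; split; last by case: dpa.
  exact/closedL/dprimeL_restrict.
- by move=> V1a; split=> [| phi psi [_ [kill _]]]; [case: V1a | apply: kill].
- move=> dpv; split; last by case: dpv.
  exact/closedM/dprimeM_restrict.
- by move=> V2v; split=> [| phi psi [_ [_ kill]]]; [case: V2v | apply: kill].
Qed.

End Restriction.

Theorem proposition2 (k : fieldType)
    (k_char0 : ([pchar k] =i pred0)%R)
    (k_infinite : forall s : seq k, exists t : k, t \notin s)
    (X2 Y2 : finType) (X1 : {set X2}) (Y1 : {set Y2})
    (H : representation k)
    (T1 : FreeAlg k X2 -> Prop) (T2 : FreeMod k X2 Y2 -> Prop)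
    (hT1 : forall a, T1 a -> inLie [set: X2] a)
    (hT2 : forall v, T2 v -> inMod [set: X2] [set: Y2] v)
    (hclosed : H_closed H [set: X2] [set: Y2] T1 T2) :
  H_closed H X1 Y1
    (fun a => T1 a /\ inLie X1 a)
    (fun v => T2 v /\ inMod X1 Y1 v).
Proof. exact: H_closed_restrict (subsetT X1) (subsetT Y1) _ _ hclosed. Qed.
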